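(* Let $S$ be a T2R semigroup, with $S=S_0\cup S_1$ as in the definition, and let $b\in S$ be an element such that $|J_b|=2$ and $I(b)=\{0\}$. Then for every $x,y\in S^1$, either $0\notin xJ_by$ or $xJ_by=\{0\}$. Moreover, $J_bS_0=S_0J_b=\{0\}$, and either $S_1J_b=\{0\}$ or $S_1J_b=J_b$.
   Context: A semigroup $S$ is a $\Delta$-semigroup if the lattice of all congruences of $S$ is a chain with respect to inclusion. A semigroup $N$ with zero $0$ is nil if every element has some power equal to $0$; non-trivial means having more than one element. A T2R semigroup is a $\Delta$-semigroup $S$ which is the disjoint union of a non-trivial nil ideal $S_0$ (with zero $0$, which is then the zero of $S$) and a subsemigroup $S_1$ which is a two-element right zero semigroup (i.e. $S_1=\{u,v\}$ with $xy=y$ for $x,y\in S_1$). $S^1$ denotes $S$ with an identity $1$ adjoined. For $a\in S$: $J(a)=S^1aS^1$, $J_a=\{s\in S:J(s)=J(a)\}$, $I(a)=J(a)\setminus J_a$. Products of elements with sets are taken elementwise, e.g. $xAy=\{xay:a\in A\}$, $AB=\{ab: a\in A, b\in B\}$. *)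

Set Implicit Arguments.

Section Semigroups.
Variable T : Type.
Variable mul : T -> T -> T.

Definition associative_op : Prop :=
  forall x y w, mul x (mul y w) = mul (mul x y) w.

Definition is_congruence (r : T -> T -> Prop) : Prop :=
  (forall x, r x x) /\
  (forall x y, r x y -> r y x) /\
  (forall x y w, r x y -> r y w -> r x w) /\
  (forall x y w, r x y -> r (mul w x) (mul w y) /\ r (mul x w) (mul y w)).

Definition Delta_semigroup : Prop :=
  associative_op /\
  forall r s : T -> T -> Prop, is_congruence r -> is_congruence s ->
    (forall x y, r x y -> s x y) \/ (forall x y, s x y -> r x y).

(* powers x^(n+1) *)
Fixpoint pow (x : T) (n : nat) : T :=
  match n with O => x | S k => mul x (pow x k) end.

(* T2R semigroups: S = S0 (disjoint) union {u, v} *)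
Definition T2R (z : T) (S0 : T -> Prop) (u v : T) : Prop :=
  Delta_semigroup /\
  (forall x s, S0 x -> S0 (mul x s) /\ S0 (mul s x)) /\
  S0 z /\ (forall x, S0 x -> mul z x = z /\ mul x z = z) /\
  (forall x, S0 x -> exists n, pow x n = z) /\
  (exists x, S0 x /\ x <> z) /\
  u <> v /\ ~ S0 u /\ ~ S0 v /\
  mul u u = u /\ mul u v = v /\ mul v u = u /\ mul v v = v /\
  (forall x, S0 x \/ x = u \/ x = v).

(* S^1: None is the adjoined identity *)
Definition mul1 (x y : option T) : option T :=
  match x, y with
  | None, _ => y
  | _, None => x
  | Some a, Some b => Some (mul a b)
  end.

Definition mul3 (x : option T) (a : T) (y : option T) : T :=
  match mul1 (mul1 x (Some a)) y with Some c => c | None => a end.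

Definition Jideal (a : T) : T -> Prop :=
  fun s => exists x y : option T, s = mul3 x a y.

Definition Jclass (a : T) : T -> Prop :=
  fun s => forall t, Jideal s t <-> Jideal a t.

Definition Iideal (a : T) : T -> Prop :=
  fun s => Jideal a s /\ ~ Jclass a s.

End Semigroups.

Definition set_eq {T} (A B : T -> Prop) : Prop := forall s, A s <-> B s.
Definition has_two_elements {T} (A : T -> Prop) : Prop :=
  exists p q, p <> q /\ forall s, A s <-> (s = p \/ s = q).

From Stdlib Require Import Classical.
Set Implicit Arguments.
Unset Strict Implicit.

(* 1. In any semigroup with zero, an element a satisfying a = m a y or
      a = x a m (x, y in S^1) with m nilpotent is 0, since then a lies in
      m^k S or S m^k for every k.
   2. As I(b) = {0}, every element of J(a), a in J, is 0 or lies in J, and any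
      two elements of J generate each other.
   3. Hence S0 J = J S0 = {0}: if w a lay in J (w in S0) then a = (x w) a y
      with x w nilpotent, so a = 0 by (1); symmetrically on the right.
   4. For c in S1 the right-zero law (S1 c = {c}) gives: if c a' lies in J
      for one a' in J then c a = a for all a in J; and a c = 0 for one a in J
      forces a' c = 0 for all a' in J.  Together with (3), whether c a = 0
      (resp. a c = 0) does not depend on the choice of a in J, and so neither
      does whether x a y = 0.
   The four claims of the proposition follow from (3), (4) and the
   resulting dichotomy: S1 either annihilates J or acts on it as identity. *)

Lemma set_eq_zero (A : Type) (P : A -> Prop) (z : A) :
  (forall s, P s -> s = z) -> P z -> set_eq P (fun s => s = z).
Proof. intros Hall Hz s; split; [apply Hall | intros ->; exact Hz]. Qed.

Section SemigroupWithZero.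
Variables (T : Type) (mul : T -> T -> T) (z : T).
Hypothesis mul_assoc : associative_op mul.
Hypothesis zero_l : forall s, mul z s = z.
Hypothesis zero_r : forall s, mul s z = z.

Definition lm (x : option T) (e : T) : T :=
  match x with None => e | Some s => mul s e end.
Definition rm (e : T) (y : option T) : T :=
  match y with None => e | Some s => mul e s end.

Lemma mul3_lm_rm x a y : mul3 mul x a y = rm (lm x a) y.
Proof. destruct x, y; reflexivity. Qed.

Lemma lm_mulr x e f : lm x (mul e f) = mul (lm x e) f.
Proof. destruct x; simpl; [apply mul_assoc | reflexivity]. Qed.

Lemma rm_mull y e f : rm (mul e f) y = mul e (rm f y).
Proof. destruct y; simpl; [symmetry; apply mul_assoc | reflexivity]. Qed.

Lemma lm_zero x : lm x z = z.
Proof. destruct x; simpl; [apply zero_r | reflexivity]. Qed.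

Lemma rm_zero y : rm z y = z.
Proof. destruct y; simpl; [apply zero_l | reflexivity]. Qed.

Lemma pow_mul_comm m k : mul (pow mul m k) m = mul m (pow mul m k).
Proof.
  induction k as [|k IH]; simpl; [reflexivity |].
  rewrite <- mul_assoc, IH; reflexivity.
Qed.

(* If a = m a y with m nilpotent, then a = 0 (a lies in m^k S for all k). *)
Lemma nil_left_fixed m n a y :
  pow mul m n = z -> a = mul m (rm a y) -> a = z.
Proof.
  intros Hn Ha.
  assert (Hk : forall k, exists t, a = mul (pow mul m k) t).
  { induction k as [|k [t Ht]]; [exists (rm a y); exact Ha |].
    exists (rm t y). simpl. rewrite <- mul_assoc, <- rm_mull, <- Ht. exact Ha. }
  destruct (Hk n) as [t Ht]. rewrite Ht, Hn. apply zero_l.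
Qed.

(* If a = x a m with m nilpotent, then a = 0 (a lies in S m^k for all k). *)
Lemma nil_right_fixed m n a x :
  pow mul m n = z -> a = lm x (mul a m) -> a = z.
Proof.
  intros Hn Ha.
  assert (Hk : forall k, exists t, a = mul t (pow mul m k)).
  { induction k as [|k [t Ht]]; [exists (lm x a); rewrite <- lm_mulr; exact Ha |].
    exists (lm x t). simpl. rewrite <- pow_mul_comm, mul_assoc, <- !lm_mulr, <- Ht.
    exact Ha. }
  destruct (Hk n) as [t Ht]. rewrite Ht, Hn. apply zero_r.
Qed.

End SemigroupWithZero.

Section JClassOverZero.
Variables (T : Type) (mul : T -> T -> T) (z b : T).
Hypothesis I_b_zero : set_eq (Iideal mul b) (fun s => s = z).
Local Notation J := (Jclass mul b).

Lemma Jclass_refl : J b.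
Proof. intro t; reflexivity. Qed.

Lemma Jclass_nonzero a : J a -> a <> z.
Proof. intros Ha ->. apply (proj2 (I_b_zero z) eq_refl). exact Ha. Qed.

Lemma Jclass_mutual a a' : J a -> J a' -> Jideal mul a' a.
Proof.
  intros Ha Ha'. apply (proj2 (Ha' a)), (proj1 (Ha a)).
  exists None, None; reflexivity.
Qed.

Lemma Jideal_of_Jclass a s : J a -> Jideal mul a s -> s = z \/ J s.
Proof.
  intros Ha Hs. destruct (classic (J s)) as [HJ | HJ]; [right; exact HJ | left].
  apply I_b_zero. split; [apply (proj1 (Ha s)); exact Hs | exact HJ].
Qed.

Lemma Jclass_lm x a : J a -> lm mul x a = z \/ J (lm mul x a).
Proof.
  intro Ha. apply (Jideal_of_Jclass Ha). exists x, None. destruct x; reflexivity.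
Qed.

Lemma Jclass_rm a y : J a -> rm mul a y = z \/ J (rm mul a y).
Proof.
  intro Ha. apply (Jideal_of_Jclass Ha). exists None, y. destruct y; reflexivity.
Qed.

End JClassOverZero.

Section NilIdealWithRightZeroComplement.
Variables (T : Type) (mul : T -> T -> T) (z : T) (S0 S1 : T -> Prop) (b : T).
Hypothesis mul_assoc : associative_op mul.
Hypothesis S0_ideal : forall x s, S0 x -> S0 (mul x s) /\ S0 (mul s x).
Hypothesis z_in_S0 : S0 z.
Hypothesis z_zero_S0 : forall x, S0 x -> mul z x = z /\ mul x z = z.
Hypothesis S0_nil : forall x, S0 x -> exists n, pow mul x n = z.
Hypothesis S1_right_zero : forall c d, S1 c -> S1 d -> mul c d = d.
Hypothesis S0_S1_cover : forall x, S0 x \/ S1 x.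
Hypothesis I_b_zero : set_eq (Iideal mul b) (fun s => s = z).
Local Notation J := (Jclass mul b).

Lemma zero_l s : mul z s = z.
Proof.
  transitivity (mul z (mul z s)).
  - rewrite mul_assoc, (proj1 (z_zero_S0 z_in_S0)); reflexivity.
  - apply z_zero_S0, (S0_ideal s z_in_S0).
Qed.

Lemma zero_r s : mul s z = z.
Proof.
  transitivity (mul (mul s z) z).
  - rewrite <- mul_assoc, (proj1 (z_zero_S0 z_in_S0)); reflexivity.
  - apply z_zero_S0, (S0_ideal s z_in_S0).
Qed.

Lemma S0_lm x w : S0 w -> S0 (lm mul x w).
Proof. intro Hw; destruct x; simpl; [apply (S0_ideal t Hw) | exact Hw]. Qed.

Lemma S0_rm w y : S0 w -> S0 (rm mul w y).
Proof. intro Hw; destruct y; simpl; [apply (S0_ideal t Hw) | exact Hw]. Qed.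

(* S0 J = {0}: a product w a in J would give a = (x w) a y with x w nil. *)
Lemma S0_annihilates_left w a : S0 w -> J a -> mul w a = z.
Proof.
  intros Hw Ha. destruct (Jclass_lm I_b_zero (Some w) Ha) as [E | Hwa]; [exact E |].
  exfalso. simpl in Hwa. destruct (Jclass_mutual Ha Hwa) as [x [y Ey]].
  destruct (S0_nil (S0_lm x Hw)) as [n Hn]. apply (Jclass_nonzero I_b_zero Ha).
  apply (nil_left_fixed mul_assoc zero_l (y := y) Hn).
  rewrite Ey at 1. rewrite mul3_lm_rm, (lm_mulr mul_assoc), (rm_mull mul_assoc).
  reflexivity.
Qed.

(* J S0 = {0}: a product a w in J would give a = x a (w y) with w y nil. *)
Lemma S0_annihilates_right w a : S0 w -> J a -> mul a w = z.
Proof.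
  intros Hw Ha. destruct (Jclass_rm I_b_zero (Some w) Ha) as [E | Haw]; [exact E |].
  exfalso. simpl in Haw. destruct (Jclass_mutual Ha Haw) as [x [y Ey]].
  destruct (S0_nil (S0_rm y Hw)) as [n Hn]. apply (Jclass_nonzero I_b_zero Ha).
  apply (nil_right_fixed mul_assoc zero_r (x := x) Hn).
  rewrite Ey at 1. rewrite mul3_lm_rm, (lm_mulr mul_assoc), (rm_mull mul_assoc), <- (lm_mulr mul_assoc).
  reflexivity.
Qed.

Lemma S1_lm_absorb c x : S1 c -> S0 (lm mul x c) \/ lm mul x c = c.
Proof.
  intro Hc. destruct x as [s |]; simpl; [| right; reflexivity].
  destruct (S0_S1_cover s) as [Hs | Hs].
  - left; apply (S0_ideal c Hs).
  - right; apply S1_right_zero; assumption.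
Qed.

Lemma S1_rm_absorb c y : S1 c -> S0 (rm mul c y) \/ mul (rm mul c y) c = c.
Proof.
  intro Hc. destruct y as [s |]; simpl; [| right; apply S1_right_zero; assumption].
  destruct (S0_S1_cover s) as [Hs | Hs].
  - left; apply (S0_ideal c Hs).
  - right. rewrite (S1_right_zero Hc Hs). apply S1_right_zero; assumption.
Qed.

(* If c in S1 does not annihilate some a' in J, it fixes every a in J:
   a = x (c a') y, where x c is c or lies in S0; so a = c a' y and c a = a. *)
Lemma S1_acts_as_identity c a' a :
  S1 c -> J a' -> J (mul c a') -> J a -> mul c a = a.
Proof.
  intros Hc Ha' Hca' Ha. destruct (Jclass_mutual Ha Hca') as [x [y Ey]].
  rewrite mul3_lm_rm, (lm_mulr mul_assoc) in Ey.
  destruct (S1_lm_absorb x Hc) as [HS0 | Hxc].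
  - exfalso. apply (Jclass_nonzero I_b_zero Ha).
    rewrite Ey, (S0_annihilates_left HS0 Ha'). apply (rm_zero zero_l).
  - rewrite Ey, Hxc, <- (rm_mull mul_assoc), mul_assoc, (S1_right_zero Hc Hc).
    reflexivity.
Qed.

Lemma left_annihilator_uniform c a a' : J a -> J a' -> mul c a = z -> mul c a' = z.
Proof.
  intros Ha Ha' Hca. destruct (S0_S1_cover c) as [Hc | Hc].
  - exact (S0_annihilates_left Hc Ha').
  - destruct (Jclass_lm I_b_zero (Some c) Ha') as [E | Hca']; [exact E |].
    exfalso. apply (Jclass_nonzero I_b_zero Ha).
    rewrite <- Hca, (S1_acts_as_identity Hc Ha' Hca' Ha). reflexivity.
Qed.

(* Whether a c = 0 does not depend on the choice of a in J: for c in S1,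
   writing a = x (a' c) y gives a c = x (a' c) and then a = (a c) y. *)
Lemma right_annihilator_uniform c a a' : J a -> J a' -> mul a c = z -> mul a' c = z.
Proof.
  intros Ha Ha' Hac. destruct (S0_S1_cover c) as [Hc | Hc].
  - exact (S0_annihilates_right Hc Ha').
  - destruct (Jclass_rm I_b_zero (Some c) Ha') as [E | Ha'c]; [exact E |].
    exfalso. simpl in Ha'c. destruct (Jclass_mutual Ha Ha'c) as [x [y Ey]].
    rewrite mul3_lm_rm, (lm_mulr mul_assoc), (rm_mull mul_assoc) in Ey.
    apply (Jclass_nonzero I_b_zero Ha).
    destruct (S1_rm_absorb y Hc) as [HS0 | Hyc].
    + rewrite Ey, <- (lm_mulr mul_assoc), (S0_annihilates_right HS0 Ha').
      apply (lm_zero zero_r).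
    + assert (Hxa'c : mul (lm mul x a') c = z).
      { rewrite <- Hac, Ey, <- mul_assoc, Hyc. reflexivity. }
      rewrite Ey, <- (rm_mull mul_assoc), Hxa'c. apply (rm_zero zero_l).
Qed.

Lemma lm_annihilator_uniform x a a' : J a -> J a' -> lm mul x a = z -> lm mul x a' = z.
Proof.
  intros Ha Ha'. destruct x as [c |]; simpl.
  - exact (left_annihilator_uniform Ha Ha').
  - intro E; contradiction (Jclass_nonzero I_b_zero Ha E).
Qed.

Lemma rm_annihilator_uniform y a a' : J a -> J a' -> rm mul a y = z -> rm mul a' y = z.
Proof.
  intros Ha Ha'. destruct y as [c |]; simpl.
  - exact (right_annihilator_uniform Ha Ha').
  - intro E; contradiction (Jclass_nonzero I_b_zero Ha E).
Qed.

Lemma sandwich_annihilator_uniform x y a a' :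
  J a -> J a' -> mul3 mul x a y = z -> mul3 mul x a' y = z.
Proof.
  intros Ha Ha'. rewrite !mul3_lm_rm. intro Hxay.
  destruct (Jclass_lm I_b_zero x Ha) as [Hxa | Hxa].
  - rewrite (lm_annihilator_uniform Ha Ha' Hxa). apply (rm_zero zero_l).
  - destruct (Jclass_lm I_b_zero x Ha') as [Hxa' | Hxa'].
    + contradiction (Jclass_nonzero I_b_zero Hxa (lm_annihilator_uniform Ha' Ha Hxa')).
    + exact (rm_annihilator_uniform Hxa Hxa' Hxay).
Qed.

Lemma S1_action_dichotomy :
  (forall c a, S1 c -> J a -> mul c a = z) \/ (forall c a, S1 c -> J a -> mul c a = a).
Proof.
  destruct (classic (exists c a', S1 c /\ J a' /\ J (mul c a')))
    as [[c [a' [Hc [Ha' Hca']]]] | Hnone].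
  - right. intros d a Hd Ha.
    rewrite <- (S1_acts_as_identity Hc Ha' Hca' Ha) at 1.
    rewrite mul_assoc, (S1_right_zero Hd Hc).
    exact (S1_acts_as_identity Hc Ha' Hca' Ha).
  - left. intros c a Hc Ha.
    destruct (Jclass_lm I_b_zero (Some c) Ha) as [E | Hca]; [exact E |].
    contradiction Hnone. exists c, a. auto.
Qed.

Lemma sandwich_dichotomy x y :
  (~ exists a, J a /\ mul3 mul x a y = z) \/
  set_eq (fun s => exists a, J a /\ s = mul3 mul x a y) (fun s => s = z).
Proof.
  destruct (classic (exists a, J a /\ mul3 mul x a y = z))
    as [[a0 [Ha0 E0]] | Hnone]; [right | left; exact Hnone].
  apply set_eq_zero.
  - intros s [a [Ha ->]]. exact (sandwich_annihilator_uniform Ha0 Ha E0).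
  - exists a0. auto.
Qed.

Lemma Jclass_S0_zero :
  set_eq (fun s => exists a c, J a /\ S0 c /\ s = mul a c) (fun s => s = z).
Proof.
  apply set_eq_zero.
  - intros s [a [c [Ha [Hc ->]]]]. exact (S0_annihilates_right Hc Ha).
  - exists b, z. split; [apply Jclass_refl | split; [exact z_in_S0 | symmetry; apply zero_r]].
Qed.

Lemma S0_Jclass_zero :
  set_eq (fun s => exists c a, S0 c /\ J a /\ s = mul c a) (fun s => s = z).
Proof.
  apply set_eq_zero.
  - intros s [c [a [Hc [Ha ->]]]]. exact (S0_annihilates_left Hc Ha).
  - exists z, b. split; [exact z_in_S0 | split; [apply Jclass_refl | symmetry; apply zero_l]].
Qed.

Lemma S1_Jclass_dichotomy u : S1 u ->
  set_eq (fun s => exists c a, S1 c /\ J a /\ s = mul c a) (fun s => s = z) \/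
  set_eq (fun s => exists c a, S1 c /\ J a /\ s = mul c a) J.
Proof.
  intro Hu. destruct S1_action_dichotomy as [Hzero | Hid]; [left | right].
  - apply set_eq_zero.
    + intros s [c [a [Hc [Ha ->]]]]. exact (Hzero c a Hc Ha).
    + exists u, b. split; [exact Hu | split; [apply Jclass_refl |]].
      symmetry. exact (Hzero u b Hu (Jclass_refl _ _)).
  - intro s. split.
    + intros [c [a [Hc [Ha ->]]]]. rewrite (Hid c a Hc Ha). exact Ha.
    + intro Hs. exists u, s. split; [exact Hu | split; [exact Hs | symmetry; exact (Hid u s Hu Hs)]].
Qed.

End NilIdealWithRightZeroComplement.

Theorem proposition2 (T : Type) (mul : T -> T -> T) (z : T) (S0 : T -> Prop)
    (u v b : T) :
  T2R mul z S0 u v ->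
  has_two_elements (Jclass mul b) ->
  set_eq (Iideal mul b) (fun s => s = z) ->
  (forall x y : option T,
      (~ exists a, Jclass mul b a /\ mul3 mul x a y = z) \/
      set_eq (fun s => exists a, Jclass mul b a /\ s = mul3 mul x a y)
             (fun s => s = z)) /\
  set_eq (fun s => exists a c, Jclass mul b a /\ S0 c /\ s = mul a c)
         (fun s => s = z) /\
  set_eq (fun s => exists c a, S0 c /\ Jclass mul b a /\ s = mul c a)
         (fun s => s = z) /\
  (set_eq (fun s => exists c a, (c = u \/ c = v) /\ Jclass mul b a /\ s = mul c a)
          (fun s => s = z) \/
   set_eq (fun s => exists c a, (c = u \/ c = v) /\ Jclass mul b a /\ s = mul c a)
          (Jclass mul b)).
Proof.
  intros HT _ I_b_zero.
  destruct HT as [[mul_assoc _] [S0_ideal [z_in_S0 [z_zero_S0 [S0_nil [_ [_ [_ [_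
    [Huu [Huv [Hvu [Hvv S0_S1_cover]]]]]]]]]]]]].
  assert (S1_right_zero : forall c d, (c = u \/ c = v) -> (d = u \/ d = v) -> mul c d = d).
  { intros c d [-> | ->] [-> | ->]; assumption. }
  split; [| split; [| split]].
  - exact (sandwich_dichotomy mul_assoc S0_ideal z_in_S0 z_zero_S0 S0_nil
             S1_right_zero S0_S1_cover I_b_zero).
  - exact (Jclass_S0_zero mul_assoc S0_ideal z_in_S0 z_zero_S0 S0_nil I_b_zero).
  - exact (S0_Jclass_zero mul_assoc S0_ideal z_in_S0 z_zero_S0 S0_nil I_b_zero).
  - exact (S1_Jclass_dichotomy mul_assoc S0_ideal z_in_S0 z_zero_S0 S0_nil
             S1_right_zero S0_S1_cover I_b_zero (or_introl eq_refl)).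
Qed.
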